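(* Let $A$ be an $m$-dimensional binary array of size $n_1\times\cdots\times n_m$ and $\mathbb{A}$ its periodic extension. Suppose $(\alpha_1,\omega_1)\neq(\alpha_2,\omega_2)$ are two ordered pairs of distinct dots of $A$, with $\alpha_j=(a_{j1},\dots,a_{jm})$, $\omega_j=(w_{j1},\dots,w_{jm})$, such that the toroidal vectors from $\alpha_1$ to $\omega_1$ and from $\alpha_2$ to $\omega_2$ both equal $\langle h_1,\dots,h_m\rangle$. If for every $i\in[m]$ with $h_i=n_i/2$ we have either $w_{1i}-a_{1i}=w_{2i}-a_{2i}$, or ($a_{1i}\neq w_{2i}$ and $a_{2i}\neq w_{1i}$), then there is an $n_1\times\cdots\times n_m$ window of $\mathbb{A}$ having a repeated difference vector.
   Context: For $n\in\mathbb{N}$, $[n]=\{1,\dots,n\}$. An $m$-dimensional binary array of size $n_1\times\cdots\times n_m$ ($m\ge2$, all $n_i\ge 2$) is a function $A:[n_1]\times\cdots\times[n_m]\to\{0,1\}$; a dot is a point where $A$ equals 1. The periodic extension $\mathbb{A}:\mathbb{Z}^m\to\{0,1\}$ is $\mathbb{A}(a_1,\dots,a_m)=A(a_1',\dots,a_m')$ with $a_i'\in[n_i]$, $a_i'\equiv a_i\pmod{n_i}$. An $n_1\times\cdots\times n_m$ window of $\mathbb{A}$ is the restriction of $\mathbb{A}$ to a box $\prod_i\{k_i,\dots,k_i+n_i-1\}$, $k_i\in\mathbb{Z}$. The difference vector from a dot $\alpha=(a_1,\dots,a_m)$ to a distinct dot $\omega=(w_1,\dots,w_m)$ is $\langle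 w_1-a_1,\dots,w_m-a_m\rangle\in\mathbb{Z}^m$; the toroidal vector is $\langle (w_1-a_1)\bmod n_1,\dots,(w_m-a_m)\bmod n_m\rangle$ with components in $\{0,\dots,n_i-1\}$. A window has a repeated difference vector if two distinct ordered pairs of distinct dots in it have the same difference vector. *)

From mathcomp Require Import all_boot all_order all_algebra.
Set Implicit Arguments. Unset Strict Implicit. Unset Printing Implicit Defensive.
Import Order.TTheory GRing.Theory Num.Theory.
Local Open Scope ring_scope.

Definition point (m : nat) := {ffun 'I_m -> int}.

Definition in_box (m : nat) (n : 'I_m -> nat) (lo : 'I_m -> int) (p : point m)
  : Prop := forall i, lo i <= p i /\ p i <= lo i + (n i)%:Z - 1.

Definition in_array (m : nat) (n : 'I_m -> nat) (p : point m) : Prop :=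
  in_box n (fun _ => 1) p.

(* An array A of size n_1 x ... x n_m is represented by a function on Z^m of
   which only the values on [n_1] x ... x [n_m] matter. *)
Definition is_dot (m : nat) (n : 'I_m -> nat) (A : point m -> bool) (p : point m)
  : Prop := in_array n p /\ A p.

Definition periodic_ext (m : nat) (n : 'I_m -> nat) (A : point m -> bool)
  : point m -> bool :=
  fun p => A [ffun i => (((p i - 1) %% (n i)%:Z)%Z + 1)].

Definition diff_vec (m : nat) (alpha omega : point m) : point m :=
  [ffun i => omega i - alpha i].

Definition toroidal_vec (m : nat) (n : 'I_m -> nat) (alpha omega : point m)
  : point m :=
  [ffun i => ((omega i - alpha i) %% (n i)%:Z)%Z].

Definition window_has_repeated_diff (m : nat) (n : 'I_m -> nat)
  (AA : point m -> bool) (k : 'I_m -> int) : Prop :=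
  exists p1 q1 p2 q2 : point m,
    [/\ in_box n k p1, in_box n k q1, in_box n k p2 & in_box n k q2] /\
    [/\ AA p1, AA q1, AA p2 & AA q2] /\
    [/\ p1 != q1, p2 != q2, (p1, q1) != (p2, q2) &
        diff_vec p1 q1 = diff_vec p2 q2].

From mathcomp Require Import all_boot all_order all_algebra zify.
Import Order.TTheory GRing.Theory Num.Theory.
Set Implicit Arguments. Unset Strict Implicit. Unset Printing Implicit Defensive.
Local Open Scope ring_scope.

(* The window is built coordinate by coordinate.  In one coordinate with
   period N, write d_j = w_j - a_j; equal toroidal vectors force
   d_1 - d_2 in {-N, 0, N}.  If d_1 = d_2, the dots themselves lie in the
   window starting at 1.  If d_1 = d_2 + N, so that 0 < d_1 < N, lift a_2
   and w_2 by multiples of N so that both pairs differ by d_1; with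
   x = (a_1 - a_2) mod N, one of four placements of the two translated
   intervals fits in a window of length N unless x = d_1 = N/2, and in
   that case a_2 = w_1 (mod N), excluded by hypothesis.  The shifts of the
   coordinates then assemble into points of a common window, and reducing
   them modulo n recovers the original dots. *)

Definition in_window (N k P : int) : Prop := k <= P /\ P <= k + N - 1.

Definition window_lifts (N a1 w1 a2 w2 : int) : Prop :=
  exists k t1 s1 t2 s2 : int,
    [/\ in_window N k (a1 + t1 * N), in_window N k (w1 + s1 * N),
        in_window N k (a2 + t2 * N), in_window N k (w2 + s2 * N) &
        (w1 + s1 * N) - (a1 + t1 * N) = (w2 + s2 * N) - (a2 + t2 * N)].

Lemma window_liftsC (N a1 w1 a2 w2 : int) :
  window_lifts N a1 w1 a2 w2 -> window_lifts N a2 w2 a1 w1.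
Proof.
by case=> k [t1 [s1 [t2 [s2 [? ? ? ? ?]]]]]; exists k, t2, s2, t1, s1.
Qed.

Lemma window_lifts_wrap (N a1 w1 a2 w2 : int) : 0 < N ->
  in_window N 1 a1 -> in_window N 1 w1 ->
  in_window N 1 a2 -> in_window N 1 w2 ->
  w1 - a1 = w2 - a2 + N ->
  (2 * (w1 - a1) = N -> a1 != w2 /\ a2 != w1) ->
  window_lifts N a1 w1 a2 w2.
Proof.
move=> N0 [? ?] [? ?] [? ?] [? ?] d_wrap hhalf.
set x := ((a1 - a2) %% N)%Z; set q := ((a1 - a2) %/ N)%Z.
have hq : a1 - a2 = q * N + x by exact: divz_eq.
have x_ge0 : 0 <= x by apply: modz_ge0; lia.
have x_ltN : x < N by exact: ltz_pmod.
set H := w1 - a1.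
have [?|?] := boolP (x + H <= N - 1).
  by exists (a1 - x), 0, 0, q, (q + 1); split; rewrite /in_window; lia.
have [?|?] := boolP (H + 1 <= x).
  by exists a1, 0, 0, (q + 1), (q + 2); split; rewrite /in_window; lia.
have [?|?] := boolP (x <= H - 1).
  by exists w2, (- q), (- q - 1), 0, 0; split; rewrite /in_window; lia.
have [?|?] := boolP (N - H + 1 <= x).
  exists (a2 + x - 2 * N + H), (- q - 1), (- q - 2), 0, 0.
  by split; rewrite /in_window; lia.
have half : 2 * H = N by lia.
have [/eqP ne_a1w2 _] := hhalf half.
have a1w2_mult : a1 - w2 = (q + 1) * N by lia.
have : q + 1 = 0 by nia.
lia.
Qed.

Lemma window_lifts_exist (N a1 w1 a2 w2 : int) : 0 < N ->
  in_window N 1 a1 -> in_window N 1 w1 ->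
  in_window N 1 a2 -> in_window N 1 w2 ->
  ((w1 - a1) %% N = (w2 - a2) %% N)%Z ->
  (2 * ((w1 - a1) %% N)%Z = N ->
     w1 - a1 = w2 - a2 \/ (a1 != w2 /\ a2 != w1)) ->
  window_lifts N a1 w1 a2 w2.
Proof.
move=> N0 ha1 hw1 ha2 hw2 hmod hhalf.
case: (ha1) (hw1) (ha2) (hw2) => ? ? [? ?] [? ?] [? ?].
set c := ((w1 - a1) %/ N)%Z - ((w2 - a2) %/ N)%Z.
have e1 : w1 - a1 = ((w1 - a1) %/ N)%Z * N + ((w1 - a1) %% N)%Z.
  exact: divz_eq.
have e2 : w2 - a2 = ((w2 - a2) %/ N)%Z * N + ((w2 - a2) %% N)%Z.
  exact: divz_eq.
have hc : (w1 - a1) - (w2 - a2) = c * N by rewrite mulrBl; lia.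
have c_range : -1 <= c <= 1 by nia.
have [c0|c0] := eqVneq c 0.
  rewrite c0 mul0r in hc.
  by exists 1, 0, 0, 0, 0; split; rewrite /in_window; lia.
have [c1|c1] := eqVneq c 1.
  rewrite c1 mul1r in hc.
  have d1_mod : ((w1 - a1) %% N)%Z = w1 - a1 by rewrite modz_small //; lia.
  by apply: (window_lifts_wrap N0 ha1 hw1 ha2 hw2); lia.
have c_m1 : c = -1 by lia.
rewrite c_m1 mulN1r in hc.
have d2_mod : ((w2 - a2) %% N)%Z = w2 - a2 by rewrite modz_small //; lia.
by apply: window_liftsC; apply: (window_lifts_wrap N0 ha2 hw2 ha1 hw1); lia.
Qed.

Definition shift (m : nat) (n : 'I_m -> nat) (a : point m) (t : 'I_m -> int)
  : point m := [ffun i => a i + t i * (n i)%:Z].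

Definition reduce (m : nat) (n : 'I_m -> nat) (p : point m) : point m :=
  [ffun i => ((p i - 1) %% (n i)%:Z)%Z + 1].

Lemma periodic_extE (m : nat) (n : 'I_m -> nat) (A : point m -> bool) p :
  periodic_ext n A p = A (reduce n p).
Proof. by []. Qed.

Lemma reduce_shift (m : nat) (n : 'I_m -> nat) (a : point m) t :
  in_array n a -> reduce n (shift n a t) = a.
Proof.
move=> ha; apply/ffunP => i; rewrite !ffunE; have /= [? ?] := ha i.
have -> : a i + t i * (n i)%:Z - 1 = t i * (n i)%:Z + (a i - 1) by lia.
by rewrite modzMDl modz_small; lia.
Qed.

Lemma shift_inj (m : nat) (n : 'I_m -> nat) (a b : point m) t s :
  in_array n a -> in_array n b -> shift n a t = shift n b s -> a = b.
Proof.
by move=> ha hb e; rewrite -(reduce_shift t ha) -(reduce_shift s hb) e.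
Qed.

Theorem mainTheorem3 (m : nat) (n : 'I_m -> nat) (A : point m -> bool)
    (a1 w1 a2 w2 h : point m) :
  (2 <= m)%N -> (forall i, (2 <= n i)%N) ->
  is_dot n A a1 -> is_dot n A w1 -> is_dot n A a2 -> is_dot n A w2 ->
  a1 != w1 -> a2 != w2 -> (a1, w1) != (a2, w2) ->
  toroidal_vec n a1 w1 = h -> toroidal_vec n a2 w2 = h ->
  (forall i : 'I_m, 2 * h i = (n i)%:Z ->
     w1 i - a1 i = w2 i - a2 i \/ (a1 i != w2 i /\ a2 i != w1 i)) ->
  exists k : 'I_m -> int, window_has_repeated_diff n (periodic_ext n A) k.
Proof.
move=> _ n2 [ia1 A1] [iw1 W1] [ia2 A2] [iw2 W2] ne1 ne2 ne12 ht1 ht2 hhalf.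
have coord i : window_lifts (n i)%:Z (a1 i) (w1 i) (a2 i) (w2 i).
  have h1 : h i = ((w1 i - a1 i) %% (n i)%:Z)%Z by rewrite -ht1 ffunE.
  have h2 : h i = ((w2 i - a2 i) %% (n i)%:Z)%Z by rewrite -ht2 ffunE.
  apply: (window_lifts_exist _ (ia1 i) (iw1 i) (ia2 i) (iw2 i)).
  - by have := n2 i; lia.
  - by rewrite -h1.
  - by rewrite -h1; apply: hhalf.
have [k hk] := fin_all_exists coord.
have [ta1 hta1] := fin_all_exists hk.
have [tw1 htw1] := fin_all_exists hta1.
have [ta2 hta2] := fin_all_exists htw1.
have [tw2 htw2] := fin_all_exists hta2.
exists k, (shift n a1 ta1), (shift n w1 tw1), (shift n a2 ta2), (shift n w2 tw2).
split; [|split].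
- by split=> i; rewrite ffunE; case: (htw2 i).
- by rewrite !periodic_extE !reduce_shift.
- split.
  + by apply: contra_neq ne1; apply: shift_inj.
  + by apply: contra_neq ne2; apply: shift_inj.
  + by apply: contra_neq ne12 => -[/shift_inj-> // /shift_inj-> //].
  + by apply/ffunP => i; rewrite !ffunE; case: (htw2 i).
Qed.
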